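(* Let $X$ be a set and $\sqsubseteq$ a binary relation on pairs of finite subsets of $X$ satisfying ($\iota_0$)–($\iota_4$). For finite $a\subseteq X$ define $$\mathrm{conv}_{\mathcal L}(a)=\{p\in X:\{p\}\sqsubseteq a\},\qquad \mathrm{conv}_{\mathcal U}(a)=\{p\in X: a\sqsubseteq\{p\}\},$$ and let $\mathcal L$ (resp. $\mathcal U$) be the family of all $A\subseteq X$ such that $\mathrm{conv}_{\mathcal L}(a)\subseteq A$ (resp. $\mathrm{conv}_{\mathcal U}(a)\subseteq A$) for every finite $a\subseteq A$. Then $(X,\mathcal L,\mathcal U)$ is a normal bi-convexity space satisfying, for all finite $a,b\subseteq X$, $$a\sqsubseteq b\iff \mathrm{conv}_{\mathcal U}(a)\cap\mathrm{conv}_{\mathcal L}(b)\neq\emptyset.$$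
   Context: Axioms for a relation $\sqsubseteq$ on pairs of finite subsets of $X$ ($a,b,a',b',a_i,b_i$ finite, $p,q\in X$): ($\iota_0$) $\emptyset\not\sqsubseteq\emptyset$; ($\iota_1$) $a\sqsubseteq b$, $a\subseteq a'$, $b\subseteq b'$ imply $a'\sqsubseteq b'$; ($\iota_2$) $\{p\}\sqsubseteq\{q\}$ and $\{q\}\sqsubseteq\{p\}$ hold iff $p=q$; ($\iota_3$) $(a_0\cup\{p\})\sqsubseteq b_0$ and $a_1\sqsubseteq(b_1\cup\{p\})$ imply $(a_0\cup a_1)\sqsubseteq(b_0\cup b_1)$; ($\iota_4$) if $a\sqsubseteq b$ then there is $p\in X$ with $a\sqsubseteq\{p\}$ and $\{p\}\sqsubseteq b$. A convexity on $X$ is a family of subsets of $X$ closed under arbitrary intersections (so $X$ belongs to it) and unions of chains; $\mathrm{conv}(A)$ is the intersection of all convex sets containing $A$. A bi-convexity space $(X,\mathcal L,\mathcal U)$ consists of two convexities on $X$. It is normal if (N1) for all $x\neq y$ in $X$, either $\mathrm{conv}_{\mathcal L}\{x\}\cap\mathrm{conv}_{\mathcal U}\{y\}=\emptyset$ or $\mathrm{conv}_{\mathcal U}\{x\}\cap\mathrm{conv}_{\mathcal L}\{y\}=\emptyset$; and (N2) for all disjoint $A\in\mathcal L$, $B\in\mathcal U$ there is $H\in\mathcal U$ with $X\setminus H\in\mathcal L$, $B\subseteq H$ and $A\cap H=\emptyset$. *)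

From mathcomp Require Import all_boot.
From mathcomp Require Import boolp classical_sets cardinality.
Set Implicit Arguments. Unset Strict Implicit. Unset Printing Implicit Defensive.
Local Open Scope classical_set_scope.

Section BiConvexity.
Variable X : Type.

(* A convexity: closed under arbitrary intersections (the empty intersection
   gives setT) and under unions of nonempty chains. *)
Definition convexity (C : set (set X)) : Prop :=
  (forall F : set (set X), F `<=` C -> C (\bigcap_(A in F) A)) /\
  (forall F : set (set X), F `<=` C -> F !=set0 ->
     (forall A B, F A -> F B -> A `<=` B \/ B `<=` A) ->
     C (\bigcup_(A in F) A)).

Definition hull (C : set (set X)) (A : set X) : set X :=
  \bigcap_(B in [set B | C B /\ A `<=` B]) B.

Definition normal_biconvexity (L U : set (set X)) : Prop :=
  [/\ convexity L, convexity U,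
      (forall x y : X, x <> y ->
         hull L [set x] `&` hull U [set y] = set0 \/
         hull U [set x] `&` hull L [set y] = set0)
    & (forall A B : set X, L A -> U B -> A `&` B = set0 ->
         exists H : set X, [/\ U H, L (~` H), B `<=` H & A `&` H = set0])].

(* The relation is given on all subsets, but only its values on pairs of
   finite subsets matter; the axioms quantify over finite subsets only. *)
Definition iota_axioms (R : set X -> set X -> Prop) : Prop :=
  [/\ ~ R set0 set0,
      (forall a b a' b', finite_set a -> finite_set b -> finite_set a' ->
         finite_set b' -> R a b -> a `<=` a' -> b `<=` b' -> R a' b'),
      (forall p q : X, (R [set p] [set q] /\ R [set q] [set p]) <-> p = q),
      (forall (a0 b0 a1 b1 : set X) (p : X), finite_set a0 -> finite_set b0 ->
         finite_set a1 -> finite_set b1 ->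
         R (a0 `|` [set p]) b0 -> R a1 (b1 `|` [set p]) ->
         R (a0 `|` a1) (b0 `|` b1))
    & (forall a b, finite_set a -> finite_set b -> R a b ->
         exists p : X, R a [set p] /\ R [set p] b)].

Definition convL (R : set X -> set X -> Prop) (a : set X) : set X :=
  [set p | R [set p] a].
Definition convU (R : set X -> set X -> Prop) (a : set X) : set X :=
  [set p | R a [set p]].

Definition familyL (R : set X -> set X -> Prop) : set (set X) :=
  [set A | forall a, finite_set a -> a `<=` A -> convL R a `<=` A].
Definition familyU (R : set X -> set X -> Prop) : set (set X) :=
  [set A | forall a, finite_set a -> a `<=` A -> convU R a `<=` A].

End BiConvexity.

From mathcomp Require Import all_boot.
From mathcomp Require Import boolp classical_sets cardinality.

Set Implicit Arguments.
Unset Strict Implicit.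
Unset Printing Implicit Defensive.
Local Open Scope classical_set_scope.

Local Hint Resolve finite_set0 finite_set1 : core.

(* Axiom (ι3) is a cut rule: a point of conv_L(a) may be replaced by a on the
   right of the relation, and dually.  Hence conv_L(a) and conv_U(a) are
   themselves closed and contain the hulls of a, which gives (N1) and, with
   (ι4), the description of the relation by meeting hulls.  For (N2), Zorn's
   lemma extends the pair (B, A) to a maximal pair (U, L) that is not linked
   (no finite u ⊆ U, l ⊆ L with u ⊑ l).  By the cut rule every point can join
   one of the two sides, so U ∪ L = X, and U is the required half-space. *)

Lemma finite_set_ind (T : Type) (P : set T -> Prop) :
  P set0 -> (forall A x, finite_set A -> P A -> P (A `|` [set x])) ->
  forall A, finite_set A -> P A.
Proof.
elim/Peq: T P => T P P0 PS A /finite_seqP[s ->].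
elim: s => [|x s IH]; first by rewrite set_nil.
have -> : [set` (x :: s)] = [set` s] `|` [set x].
  apply/seteqP; split=> y /=; rewrite inE.
    by case/orP=> [/eqP->|]; [right|left].
  by case=> [->|->]; rewrite ?eqxx ?orbT.
by apply: PS => //; apply: finite_seq.
Qed.

Lemma finite_sub_chain (T : Type) (D : set T) (F : set (set T)) (w : set T) :
  total_on F subset -> finite_set w -> w `<=` D `|` \bigcup_(S in F) S ->
  w `<=` D \/ exists2 S, F S & w `<=` D `|` S.
Proof.
move=> chF; move: w; apply: finite_set_ind => [|w x _ IH] wsub; first by left.
have {}IH := IH (subset_trans (@subsetUl _ w [set x]) wsub).
have [xD|[S' FS' S'x]] := wsub x (or_intror erefl).
  case: IH => [wD|[S FS wS]]; [left|right; exists S => //].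
    by move=> y [/wD|->].
  by move=> y [/wS|->]; last left.
right; case: IH => [wD|[S FS wS]].
  by exists S' => // y [/wD|->]; [left|right].
have [SS'|S'S] := chF S S' FS FS'.
  by exists S' => // y [/wS [|/SS']|->]; [left|right|right].
by exists S => // y [/wS|->]; last by right; apply: S'S.
Qed.

Definition finitary_closed (T : Type) (c : set T -> set T) : set (set T) :=
  [set A | forall a, finite_set a -> a `<=` A -> c a `<=` A].

Lemma convexity_finitary_closed (T : Type) (c : set T -> set T) :
  convexity (finitary_closed c).
Proof.
split=> [F FC a fa aF x cax A FA|F FC [S0 FS0] chF a fa aF x cax].
  by apply: (FC A FA a fa) => // y /aF; apply.
have := @finite_sub_chain _ set0 F a chF fa; rewrite set0U => /(_ aF).
case=> [a0|[S FS aS]].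
  by exists S0 => //; apply: (FC S0 FS0 a fa) => // y /a0.
by exists S => //; apply: (FC S FS a fa) => //; rewrite set0U in aS.
Qed.

Lemma hull_sub (T : Type) (C : set (set T)) (A B : set T) :
  C B -> A `<=` B -> hull C A `<=` B.
Proof. by move=> CB AB x; apply. Qed.

Lemma iota_axioms_flip (X : Type) (R : set X -> set X -> Prop) :
  iota_axioms R -> iota_axioms (fun a b => R b a).
Proof.
case=> iota0 iota1 iota2 iota3 iota4; split => //.
- by move=> a b a' b' fa fb fa' fb' Rba ab ba'; exact: (iota1 b a).
- by move=> p q; rewrite -(iota2 p q); split=> -[].
- move=> a0 b0 a1 b1 p fa0 fb0 fa1 fb1 R1 R2.
  by rewrite [a0 `|` _]setUC [b0 `|` _]setUC; exact: (iota3 b1 a1 b0 a0 p).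
- by move=> a b fa fb /(iota4 _ _ fb fa)[p []]; exists p.
Qed.

Section Consequences.
Variables (X : Type) (R : set X -> set X -> Prop).
Hypothesis HR : iota_axioms R.

Lemma iota_refl p : R [set p] [set p].
Proof. by case: HR => _ _ iota2 _ _; have [_ /(_ erefl) []] := iota2 p p. Qed.

Lemma iota_mono a b a' b' : finite_set a' -> finite_set b' ->
  R a b -> a `<=` a' -> b `<=` b' -> R a' b'.
Proof.
case: HR => _ iota1 _ _ _ fa' fb' Rab aa' bb'.
by apply: (iota1 a b) => //;
  [exact: sub_finite_set aa' fa'|exact: sub_finite_set bb' fb'].
Qed.

Lemma iota_cut1 a d e x : finite_set a -> finite_set d -> finite_set e ->
  R [set x] a -> R d (e `|` [set x]) -> R d (e `|` a).
Proof.
case: HR => _ _ _ iota3 _ fa fd fe Rxa Rdx.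
have := iota3 set0 a d e x (finite_set0 _) fa fd fe.
by rewrite !set0U [a `|` e]setUC; apply.
Qed.

Lemma iota_trans1 a b p : finite_set a -> finite_set b ->
  R a [set p] -> R [set p] b -> R a b.
Proof.
move=> fa fb Rap Rpb.
by have := iota_cut1 fb fa (finite_set0 _) Rpb; rewrite !set0U; apply.
Qed.

Lemma iota_cut a c d e : finite_set a -> finite_set c -> finite_set d ->
  finite_set e -> c `<=` convL R a -> R d (e `|` c) -> R d (e `|` a).
Proof.
move=> fa fc fd; move: c fc e; apply: finite_set_ind => [|c x fc IH] e fe ca Rdc.
  by rewrite setU0 in Rdc; apply: iota_mono Rdc _ _ => //; rewrite ?finite_setU.
have Rdca : R d (e `|` c `|` a).
  apply: iota_cut1 => //; first by rewrite finite_setU.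
    by apply: ca; right.
  by rewrite -setUA.
move: Rdca; rewrite setUAC => /IH; rewrite -setUA setUid; apply.
- by rewrite finite_setU.
- by move=> y cy; apply: ca; left.
Qed.

Lemma convL_closed a : finite_set a -> familyL R (convL R a).
Proof.
move=> fa c fc ca q Rqc.
by have := iota_cut fa fc (finite_set1 q) (finite_set0 _) ca; rewrite !set0U; apply.
Qed.

Lemma hull_convL_sub a : finite_set a -> hull (familyL R) a `<=` convL R a.
Proof.
move=> fa; apply: hull_sub; first exact: convL_closed.
by move=> p ap; apply: iota_mono (iota_refl p) _ _ => // y ->.
Qed.

Lemma iota_iff_meet a b : finite_set a -> finite_set b ->
  R a b <-> convU R a `&` convL R b !=set0.
Proof.
move=> fa fb; split; last by case=> p [Rap Rpb]; exact: iota_trans1 Rap Rpb.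
by case: HR => _ _ _ _ iota4 /(iota4 a b fa fb)[p []]; exists p.
Qed.

End Consequences.

Lemma hull_convU_sub (X : Type) (R : set X -> set X -> Prop) :
  iota_axioms R -> forall a, finite_set a -> hull (familyU R) a `<=` convU R a.
Proof. by move=> HR a; exact: (hull_convL_sub (iota_axioms_flip HR)). Qed.

Section Normality.
Variables (X : Type) (R : set X -> set X -> Prop).
Hypothesis HR : iota_axioms R.

Lemma hull_singletons_disjoint x y : x <> y ->
  hull (familyL R) [set x] `&` hull (familyU R) [set y] = set0 \/
  hull (familyU R) [set x] `&` hull (familyL R) [set y] = set0.
Proof.
move=> xy.
have [->|/set0P[z [zLx zUy]]] :=
  eqVneq (hull (familyL R) [set x] `&` hull (familyU R) [set y]) set0.
  by left.
right; apply/seteqP; split=> // w [wUx wLy]; apply: xy.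
have hL p := hull_convL_sub HR (finite_set1 p).
have hU p := hull_convU_sub HR (finite_set1 p).
case: HR => _ _ iota2 _ _; apply/iota2; split.
- exact: (iota_trans1 HR _ _ (hU _ _ wUx) (hL _ _ wLy)).
- exact: (iota_trans1 HR _ _ (hU _ _ zUy) (hL _ _ zLx)).
Qed.

Definition linked (U L : set X) : Prop :=
  exists u l, [/\ finite_set u, finite_set l, u `<=` U, l `<=` L & R u l].

Lemma linked_mono U L U' L' : U `<=` U' -> L `<=` L' -> linked U L -> linked U' L'.
Proof.
move=> UU' LL' [u [l [fu fl uU lL Rul]]].
by exists u, l; split=> // y; [move/uU/UU'|move/lL/LL'].
Qed.

Lemma linked_cut U L x :
  linked (U `|` [set x]) L -> linked U (L `|` [set x]) -> linked U L.
Proof.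
move=> [u2 [l2 [fu2 fl2 uU2 lL2 R2]]] [u1 [l1 [fu1 fl1 uU1 lL1 R1]]].
case: (HR) => _ _ _ iota3 _.
have fu2' : finite_set (u2 `&` U) by exact: finite_setIl.
have fl1' : finite_set (l1 `&` L) by exact: finite_setIl.
exists (u2 `&` U `|` u1), (l2 `|` l1 `&` L); split.
- by rewrite finite_setU.
- by rewrite finite_setU.
- by move=> y [[]|/uU1].
- by move=> y [/lL2|[]].
apply: (iota3 _ _ _ _ x) => //.
  apply: iota_mono R2 _ _ => //; first by rewrite finite_setU.
  by move=> y u2y; case: (uU2 y u2y) => [Uy|->]; [left|right].
apply: iota_mono R1 _ _ => //; first by rewrite finite_setU.
by move=> y l1y; case: (lL1 y l1y) => [Ly|->]; [left|right].
Qed.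

Lemma not_linked_disjoint A B :
  familyL R A -> familyU R B -> A `&` B = set0 -> ~ linked B A.
Proof.
move=> LA UB AB [u [l [fu fl uB lA /(iota_iff_meet HR fu fl)[p [up lp]]]]].
have : (A `&` B) p by split; [exact: LA l fl lA p lp|exact: UB u fu uB p up].
by rewrite AB.
Qed.

Lemma not_linked_cover A B :
  familyL R A -> familyU R B -> A `&` B = set0 ->
  exists U L, [/\ B `<=` U, A `<=` L, ~ linked U L & forall x, U x \/ L x].
Proof.
move=> LA UB AB.
(* A pair of sets (U, L) is encoded as the tagged set {(true, u)} ∪ {(false, l)},
   so that Zorn_bigcup applies; every candidate pair contains base = (B, A). *)
pose side b (S : set (bool * X)) := [set x | S (b, x)].
pose base := [set z : bool * X | if z.1 then B z.2 else A z.2].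
pose sep S := ~ linked (side true (base `|` S)) (side false (base `|` S)).
have sep0 := not_linked_disjoint LA UB AB.
have [M [sepM maxM]] : exists M, sep M /\ forall S, M `<` S -> ~ sep S.
  apply: Zorn_bigcup => F Fsep chF [u [l [fu fl uF lF Rul]]].
  pose w := pair true @` u `|` pair false @` l.
  have fw : finite_set w by rewrite finite_setU; split; apply: finite_image.
  have wF : w `<=` base `|` \bigcup_(S in F) S.
    by move=> _ [[y /uF ? <-]|[y /lF ? <-]].
  case: (finite_sub_chain chF fw wF) => [wbase|[S FS wS]].
    apply: sep0; exists u, l; split=> // y ?.
      by apply: (wbase (true, y)); left; exists y.
    by apply: (wbase (false, y)); right; exists y.
  apply: (Fsep S FS); exists u, l; split=> // y ?.
    by apply: (wS (true, y)); left; exists y.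
  by apply: (wS (false, y)); right; exists y.
exists (side true (base `|` M)), (side false (base `|` M)); split=> //.
- by move=> y; left.
- by move=> y; left.
move=> x; apply: contrapT => /not_orP[nU nL].
have grow b : ~ side b (base `|` M) x -> ~ sep (M `|` [set (b, x)]).
  apply: contra_not => sepMx; apply: contrapT => nb; apply: maxM sepMx.
  split; first exact: subsetUl.
  by move=> /(_ (b, x) (or_intror erefl)) Mbx; apply: nb; right.
apply: sepM; apply: (@linked_cut _ _ x).
- apply: linked_mono (contrapT (grow true nU)).
    by move=> y [By|[My|[->]]]; [left; left|left; right|right].
  by move=> y [By|[My|//]]; [left|right].
- apply: linked_mono (contrapT (grow false nL)).
    by move=> y [By|[My|//]]; [left|right].
  by move=> y [By|[My|[->]]]; [left; left|left; right|right].
Qed.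

Lemma normal_separation A B :
  familyL R A -> familyU R B -> A `&` B = set0 ->
  exists H, [/\ familyU R H, familyL R (~` H), B `<=` H & A `&` H = set0].
Proof.
move=> LA UB AB; have [U [L [BU AL sepUL cover]]] := not_linked_cover LA UB AB.
exists U; split=> //.
- move=> b fb bU p Rbp; case: (cover p) => // Lp; case: sepUL.
  by exists b, [set p]; split=> // y ->.
- move=> a fa aL p Rpa Up; apply: sepUL.
  exists [set p], a; split=> // [y -> //|y /aL].
  by case: (cover y).
- apply/seteqP; split=> // y [/AL Ly Uy]; case: sepUL.
  by exists [set y], [set y]; split=> // [z ->|z ->|]; last exact: iota_refl.
Qed.

End Normality.

Theorem mainTheorem10 (X : Type) (R : set X -> set X -> Prop) :
  iota_axioms R ->
  normal_biconvexity (familyL R) (familyU R) /\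
  (forall a b : set X, finite_set a -> finite_set b ->
     (R a b <-> convU R a `&` convL R b !=set0)).
Proof.
move=> HR; split; last exact: iota_iff_meet.
split.
- exact: (convexity_finitary_closed (convL R)).
- exact: (convexity_finitary_closed (convU R)).
- exact: hull_singletons_disjoint.
- exact: normal_separation.
Qed.
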